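(* In $\lambda_{\mathrm{act}}$: if $\Gamma ; \Delta \vdash \mathcal{C}$ and $\mathcal{C} \equiv \mathcal{D}$ for some configuration $\mathcal{D}$, then $\Gamma ; \Delta \vdash \mathcal{D}$.
   Context: The calculus $\lambda_{\mathrm{act}}$. Types $A,B,C ::= \mathbf{1} \mid A \xrightarrow{C} B \mid \mathsf{ActorRef}(A)$; values $V,W ::= \alpha \mid \lambda x.M \mid ()$ ($\alpha$ a variable or name); computations $M,N ::= V\,W \mid \mathbf{let}\ x \Leftarrow M\ \mathbf{in}\ N \mid \mathbf{return}\ V \mid \mathbf{spawn}\ M \mid \mathbf{send}\ V\ W \mid \mathbf{receive} \mid \mathbf{self}$. Value typing $\Gamma\vdash V:A$ ($\alpha$ looked up in $\Gamma$; $\lambda x.M : A\xrightarrow{C}B$ if $\Gamma,x:A\mid C\vdash M:B$; $():\mathbf 1$) and computation typing $\Gamma\mid C\vdash M:A$ with mailbox type $C$ ($V\,W:B$ if $V:A\xrightarrow{C}B$, $W:A$; $\mathbf{let}$ with both parts under mailbox $C$; $\mathbf{return}\ V:A$ if $V:A$; $\mathbf{send}\ V\ W:\mathbf 1$ if $V:A$, $W:\mathsf{ActorRef}(A)$; $\Gamma\mid A\vdash\mathbf{receive}:A$; $\Gamma\mid C\vdash \mathbf{spawn}\ M:\mathsf{ActorRef}(A)$ if $\Gamma\mid A\vdash M:\mathbf 1$; $\Gamma\mid A\vdash\mathbf{self}:\mathsf{ActorRef}(A)$). Configurations $\mathcal{C},\mathcal{D},\mathcal{E} ::= \mathcal{C}\parallel\mathcal{D}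 \mid (\nu a)\mathcal{C} \mid \langle a, M, \vec V\rangle$, where $\langle a, M, \vec V\rangle$ is an actor named $a$ evaluating $M$ with mailbox $\vec V = V_1\cdot\ldots\cdot V_n$. Configuration contexts $G ::= [\,]\mid G\parallel\mathcal{C}\mid(\nu a)G$. Configuration typing $\Gamma;\Delta\vdash\mathcal{C}$ ($\Delta$ linear, names to types): (Par) $\Gamma;\Delta_1\vdash\mathcal{C}_1$ and $\Gamma;\Delta_2\vdash\mathcal{C}_2$ give $\Gamma;\Delta_1,\Delta_2\vdash\mathcal{C}_1\parallel\mathcal{C}_2$ (disjoint); (Pid) $\Gamma,a:\mathsf{ActorRef}(A);\Delta,a:A\vdash\mathcal{C}$ gives $\Gamma;\Delta\vdash(\nu a)\mathcal{C}$; (Actor) if $\Gamma,a:\mathsf{ActorRef}(A)\mid A\vdash M:\mathbf 1$ and $\Gamma,a:\mathsf{ActorRef}(A)\vdash V_i:A$ for all $i$, then $\Gamma,a:\mathsf{ActorRef}(A);a:A\vdash\langle a,M,\vec V\rangle$. Structural congruence $\equiv$: the least congruence closed under $G[-]$ with $\mathcal{C}\parallel\mathcal{D}\equiv\mathcal{D}\parallel\mathcal{C}$, $\mathcal{C}\parallel(\mathcal{D}\parallel\mathcal{E})\equiv(\mathcal{C}\parallel\mathcal{D})\parallel\mathcal{E}$, and $\mathcal{C}\parallel(\nu a)\mathcal{D}\equiv(\nu a)(\mathcal{C}\parallel\mathcal{D})$ if $a\notin\mathsf{fv}(\mathcal{C})$. *)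

From Stdlib Require Import List Arith.
Import ListNotations.

(* Identifiers: variables and names share one namespace (alpha ranges over both). *)
Definition ident := nat.

Inductive ty : Type :=
| TUnit : ty
| TFun : ty -> ty -> ty -> ty         (* TFun A C B  =  A -C-> B *)
| TRef : ty -> ty.

Inductive val : Type :=
| VId : ident -> val
| VLam : ident -> comp -> val
| VUnit : val
with comp : Type :=
| CApp : val -> val -> comp
| CLet : ident -> comp -> comp -> comp
| CReturn : val -> comp
| CSpawn : comp -> comp
| CSend : val -> val -> comp
| CReceive : comp
| CSelf : comp.

Inductive config : Type :=
| Par : config -> config -> config
| Nu : ident -> config -> config
| Actor : ident -> comp -> list val -> config.

Fixpoint fv_val (a : ident) (V : val) : bool :=
  match V with
  | VId b => Nat.eqb a b
  | VLam x M => negb (Nat.eqb a x) && fv_comp a M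
  | VUnit => false
  end
with fv_comp (a : ident) (M : comp) : bool :=
  match M with
  | CApp V W => fv_val a V || fv_val a W
  | CLet x M N => fv_comp a M || (negb (Nat.eqb a x) && fv_comp a N)
  | CReturn V => fv_val a V
  | CSpawn M => fv_comp a M
  | CSend V W => fv_val a V || fv_val a W
  | CReceive => false
  | CSelf => false
  end.

Fixpoint fv_config (a : ident) (C : config) : bool :=
  match C with
  | Par C1 C2 => fv_config a C1 || fv_config a C2
  | Nu b C => negb (Nat.eqb a b) && fv_config a C
  | Actor b M Vs => Nat.eqb a b || fv_comp a M || existsb (fv_val a) Vs
  end.

Definition env := ident -> option ty.
Definition extend (G : env) (x : ident) (A : ty) : env :=
  fun y => if Nat.eqb y x then Some A else G y.

Definition lenv := ident -> option ty.
Definition lempty : lenv := fun _ => None.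
Definition lsingle (a : ident) (A : ty) : lenv :=
  fun b => if Nat.eqb b a then Some A else None.
Definition ldisjoint (D1 D2 : lenv) : Prop :=
  forall a, D1 a = None \/ D2 a = None.
Definition lunion (D1 D2 : lenv) : lenv :=
  fun a => match D1 a with Some A => Some A | None => D2 a end.

Inductive vtyped : env -> val -> ty -> Prop :=
| T_Id : forall G a A, G a = Some A -> vtyped G (VId a) A
| T_Lam : forall G x M A C B,
    ctyped (extend G x A) C M B -> vtyped G (VLam x M) (TFun A C B)
| T_Unit : forall G, vtyped G VUnit TUnit
with ctyped : env -> ty -> comp -> ty -> Prop :=
| T_App : forall G C V W A B,
    vtyped G V (TFun A C B) -> vtyped G W A -> ctyped G C (CApp V W) B
| T_Let : forall G C x M N A B,
    ctyped G C M A -> ctyped (extend G x A) C N B -> ctyped G C (CLet x M N) B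
| T_Return : forall G C V A, vtyped G V A -> ctyped G C (CReturn V) A
| T_Send : forall G C V W A,
    vtyped G V A -> vtyped G W (TRef A) -> ctyped G C (CSend V W) TUnit
| T_Receive : forall G A, ctyped G A CReceive A
| T_Spawn : forall G C M A, ctyped G A M TUnit -> ctyped G C (CSpawn M) (TRef A)
| T_Self : forall G A, ctyped G A CSelf (TRef A).

Inductive ctyped_conf : env -> lenv -> config -> Prop :=
| T_Par : forall G D1 D2 C1 C2,
    ctyped_conf G D1 C1 -> ctyped_conf G D2 C2 -> ldisjoint D1 D2 ->
    ctyped_conf G (lunion D1 D2) (Par C1 C2)
| T_Pid : forall G D a A C,
    D a = None ->
    ctyped_conf (extend G a (TRef A)) (extend D a A) C ->
    ctyped_conf G D (Nu a C)
| T_Actor : forall G a A M Vs,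
    G a = Some (TRef A) ->
    ctyped G A M TUnit ->
    (forall V, In V Vs -> vtyped G V A) ->
    ctyped_conf G (lsingle a A) (Actor a M Vs).

Inductive scong : config -> config -> Prop :=
| SC_refl : forall C, scong C C
| SC_sym : forall C D, scong C D -> scong D C
| SC_trans : forall C D E, scong C D -> scong D E -> scong C E
| SC_comm : forall C D, scong (Par C D) (Par D C)
| SC_assoc : forall C D E, scong (Par C (Par D E)) (Par (Par C D) E)
| SC_extr : forall C a D, fv_config a C = false ->
    scong (Par C (Nu a D)) (Nu a (Par C D))
| SC_ctx_par : forall C D E, scong C D -> scong (Par C E) (Par D E)
| SC_ctx_nu : forall a C D, scong C D -> scong (Nu a C) (Nu a D).

(* Typing is invariant under each axiom of structural congruence, read in both
   directions; since the configuration typing rules are compositional, this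
   invariance propagates through the contexts [G[-]] and through symmetry and
   transitivity.  The only axiom with content is scope extrusion
   [C || (nu a) D == (nu a)(C || D)]: when [a] is not free in [C], it is not in
   the linear environment of [C] (every name of that environment occurs in [C]),
   and the typing of [C] does not depend on the type [Gamma] assigns to [a]. *)
From Stdlib Require Import List Arith Bool FunctionalExtensionality.

Scheme vtyped_ind_mut := Induction for vtyped Sort Prop
with ctyped_ind_mut := Induction for ctyped Sort Prop.
Combined Scheme typed_ind_mut from vtyped_ind_mut, ctyped_ind_mut.

Lemma extend_neq (G : env) (x y : ident) (A : ty) :
  Nat.eqb y x = false -> extend G x A y = G y.
Proof. intros Hyx. unfold extend. now rewrite Hyx. Qed.

Lemma extend_agree (G G' : env) (x : ident) (A : ty) (P : ident -> bool) :
  (forall a, negb (Nat.eqb a x) && P a = true -> G a = G' a) ->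
  forall a, P a = true -> extend G x A a = extend G' x A a.
Proof.
  intros HP a Ha. unfold extend.
  destruct (Nat.eqb a x) eqn:Hax; [reflexivity |].
  apply HP. now rewrite Hax, Ha.
Qed.

Lemma typed_env_agree :
  (forall G V A, vtyped G V A -> forall G',
     (forall a, fv_val a V = true -> G a = G' a) -> vtyped G' V A) /\
  (forall G C M B, ctyped G C M B -> forall G',
     (forall a, fv_comp a M = true -> G a = G' a) -> ctyped G' C M B).
Proof.
  apply typed_ind_mut.
  - intros G a A HGa G' HG. constructor. rewrite <- HGa. symmetry.
    apply HG. simpl. apply Nat.eqb_refl.
  - intros G x M A C B _ IHM G' HG. constructor. apply IHM.
    now apply extend_agree with (P := fun b => fv_comp b M).
  - constructor.
  - intros G C V W A B _ IHV _ IHW G' HG. simpl in HG.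
    apply T_App with A; [apply IHV | apply IHW];
      intros b Hb; apply HG; rewrite Hb; auto with bool.
  - intros G C x M N A B _ IHM _ IHN G' HG. simpl in HG.
    apply T_Let with A; [apply IHM | apply IHN].
    + intros b Hb. apply HG. now rewrite Hb.
    + apply extend_agree with (P := fun b => fv_comp b N).
      intros b Hb. apply HG. rewrite Hb. auto with bool.
  - intros G C V A _ IHV G' HG. constructor. now apply IHV.
  - intros G C V W A _ IHV _ IHW G' HG. simpl in HG.
    apply T_Send with A; [apply IHV | apply IHW];
      intros b Hb; apply HG; rewrite Hb; auto with bool.
  - constructor.
  - intros G C M A _ IHM G' HG. constructor. now apply IHM.
  - constructor.
Qed.

Lemma ctyped_conf_env_agree (G G' : env) (D : lenv) (C : config) :
  ctyped_conf G D C ->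
  (forall a, fv_config a C = true -> G a = G' a) -> ctyped_conf G' D C.
Proof.
  intros HC; revert G'.
  induction HC as [G D1 D2 C1 C2 _ IH1 _ IH2 Hd | G D a A C HDa _ IH
                  | G a A M Vs HGa HM HVs];
    intros G' HG; simpl in HG.
  - constructor; auto.
    + apply IH1. intros b Hb. apply HG. now rewrite Hb.
    + apply IH2. intros b Hb. apply HG. rewrite Hb. auto with bool.
  - apply T_Pid with A; auto. apply IH.
    now apply extend_agree with (P := fun b => fv_config b C).
  - constructor.
    + rewrite <- HGa. symmetry. apply HG. now rewrite Nat.eqb_refl.
    + apply (proj2 typed_env_agree) with G; auto.
      intros b Hb. apply HG. rewrite Hb. auto with bool.
    + intros V HV. apply (proj1 typed_env_agree) with G; auto.
      intros b Hb. apply HG. rewrite (proj2 (existsb_exists _ _)); eauto with bool.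
Qed.

Lemma ctyped_conf_extend_fresh (G : env) (D : lenv) (C : config) (a : ident) (A : ty) :
  fv_config a C = false ->
  ctyped_conf G D C <-> ctyped_conf (extend G a A) D C.
Proof.
  intros Ha.
  assert (Hagree : forall b, fv_config b C = true -> G b = extend G a A b).
  { intros b Hb. unfold extend. destruct (Nat.eqb b a) eqn:Hba; [| reflexivity].
    apply Nat.eqb_eq in Hba; subst. congruence. }
  split; intros HC; eapply ctyped_conf_env_agree; eauto.
  intros b Hb. symmetry. auto.
Qed.

Lemma ctyped_conf_dom_fv (G : env) (D : lenv) (C : config) (a : ident) :
  ctyped_conf G D C -> D a <> None -> fv_config a C = true.
Proof.
  intros HC; revert a.
  induction HC as [G D1 D2 C1 C2 _ IH1 _ IH2 _ | G D a A C HDa _ IH | G a A M Vs _ _ _];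
    intros b Hb; simpl.
  - unfold lunion in Hb. destruct (D1 b) eqn:HD1b.
    + rewrite IH1; [reflexivity | congruence].
    + rewrite IH2; auto with bool.
  - destruct (Nat.eqb b a) eqn:Hba.
    + apply Nat.eqb_eq in Hba; subst. contradiction.
    + apply IH. now rewrite extend_neq.
  - unfold lsingle in Hb. destruct (Nat.eqb b a); [reflexivity | contradiction].
Qed.

Lemma ctyped_conf_fresh_dom (G : env) (D : lenv) (C : config) (a : ident) :
  ctyped_conf G D C -> fv_config a C = false -> D a = None.
Proof.
  intros HC Ha. destruct (D a) eqn:HDa; [| reflexivity].
  rewrite (ctyped_conf_dom_fv G D C a HC) in Ha; congruence.
Qed.

Definition lremove (D : lenv) (a : ident) : lenv :=
  fun b => if Nat.eqb b a then None else D b.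

Lemma ldisjoint_sym (D1 D2 : lenv) : ldisjoint D1 D2 -> ldisjoint D2 D1.
Proof. intros H a. destruct (H a); auto. Qed.

Lemma ldisjoint_lunion_l (D1 D2 D3 : lenv) :
  ldisjoint (lunion D1 D2) D3 <-> ldisjoint D1 D3 /\ ldisjoint D2 D3.
Proof.
  unfold ldisjoint, lunion. split.
  - intros H; split; intros a; destruct (H a), (D1 a); auto; discriminate.
  - intros [H1 H2] a. destruct (D1 a) eqn:HD1; auto.
    destruct (H1 a); auto; congruence.
Qed.

Lemma ldisjoint_lunion_r (D1 D2 D3 : lenv) :
  ldisjoint D1 (lunion D2 D3) <-> ldisjoint D1 D2 /\ ldisjoint D1 D3.
Proof.
  split.
  - intros H. apply ldisjoint_sym, ldisjoint_lunion_l in H as [H2 H3].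
    split; now apply ldisjoint_sym.
  - intros [H2 H3]. apply ldisjoint_sym, ldisjoint_lunion_l.
    split; now apply ldisjoint_sym.
Qed.

Lemma ldisjoint_extend_r (D1 D2 : lenv) (a : ident) (A : ty) :
  D1 a = None -> ldisjoint D1 D2 -> ldisjoint D1 (extend D2 a A).
Proof.
  intros Ha H b. unfold extend. destruct (Nat.eqb b a) eqn:Hba; auto.
  apply Nat.eqb_eq in Hba; subst. auto.
Qed.

Lemma ldisjoint_lremove_r (D1 D2 : lenv) (a : ident) :
  ldisjoint D1 D2 -> ldisjoint D1 (lremove D2 a).
Proof. intros H b. unfold lremove. destruct (Nat.eqb b a); auto. Qed.

Lemma lunion_comm (D1 D2 : lenv) : ldisjoint D1 D2 -> lunion D1 D2 = lunion D2 D1.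
Proof.
  intros H. extensionality a. unfold lunion.
  destruct (H a) as [E | E]; rewrite E; destruct (D1 a), (D2 a); congruence.
Qed.

Lemma lunion_assoc (D1 D2 D3 : lenv) :
  lunion D1 (lunion D2 D3) = lunion (lunion D1 D2) D3.
Proof. extensionality a. unfold lunion. now destruct (D1 a). Qed.

Lemma extend_lunion_r (D1 D2 : lenv) (a : ident) (A : ty) :
  D1 a = None -> extend (lunion D1 D2) a A = lunion D1 (extend D2 a A).
Proof.
  intros Ha. extensionality b. unfold extend, lunion.
  destruct (Nat.eqb b a) eqn:Hba; [| reflexivity].
  apply Nat.eqb_eq in Hba; subst. now rewrite Ha.
Qed.

Lemma extend_inj (D D' : lenv) (a : ident) (A : ty) :
  D a = None -> D' a = None -> extend D a A = extend D' a A -> D = D'.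
Proof.
  intros Ha Ha' HDD'. extensionality b.
  pose proof (f_equal (fun f => f b) HDD') as Hb. unfold extend in Hb.
  destruct (Nat.eqb b a) eqn:Hba; [| exact Hb].
  apply Nat.eqb_eq in Hba; subst. congruence.
Qed.

Lemma lremove_eq (D : lenv) (a : ident) : lremove D a a = None.
Proof. unfold lremove. now rewrite Nat.eqb_refl. Qed.

Lemma extend_lremove (D : lenv) (a : ident) (A : ty) :
  D a = Some A -> extend (lremove D a) a A = D.
Proof.
  intros Ha. extensionality b. unfold extend, lremove.
  destruct (Nat.eqb b a) eqn:Hba; [| reflexivity].
  apply Nat.eqb_eq in Hba; subst. auto.
Qed.

Lemma ctyped_conf_par_inv (G : env) (D : lenv) (C E : config) :
  ctyped_conf G D (Par C E) ->
  exists D1 D2, D = lunion D1 D2 /\ ldisjoint D1 D2 /\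
    ctyped_conf G D1 C /\ ctyped_conf G D2 E.
Proof. intros H. inversion H; subst. eauto 6. Qed.

Lemma ctyped_conf_nu_inv (G : env) (D : lenv) (a : ident) (C : config) :
  ctyped_conf G D (Nu a C) ->
  exists A, D a = None /\ ctyped_conf (extend G a (TRef A)) (extend D a A) C.
Proof. intros H. inversion H; subst. eauto. Qed.

Lemma ctyped_conf_par_comm (G : env) (D : lenv) (C E : config) :
  ctyped_conf G D (Par C E) -> ctyped_conf G D (Par E C).
Proof.
  intros H. destruct (ctyped_conf_par_inv _ _ _ _ H) as (D1 & D2 & -> & Hd & HC & HE).
  rewrite lunion_comm by exact Hd. constructor; auto. now apply ldisjoint_sym.
Qed.

Lemma ctyped_conf_par_assoc (G : env) (D : lenv) (C1 C2 C3 : config) :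
  ctyped_conf G D (Par C1 (Par C2 C3)) -> ctyped_conf G D (Par (Par C1 C2) C3).
Proof.
  intros H.
  destruct (ctyped_conf_par_inv _ _ _ _ H) as (D1 & D23 & -> & Hd & HC1 & H23).
  destruct (ctyped_conf_par_inv _ _ _ _ H23) as (D2 & D3 & -> & Hd23 & HC2 & HC3).
  apply ldisjoint_lunion_r in Hd as [Hd12 Hd13].
  rewrite lunion_assoc. apply T_Par; [apply T_Par | |]; auto.
  now apply ldisjoint_lunion_l.
Qed.

Lemma ctyped_conf_par_assoc_inv (G : env) (D : lenv) (C1 C2 C3 : config) :
  ctyped_conf G D (Par (Par C1 C2) C3) -> ctyped_conf G D (Par C1 (Par C2 C3)).
Proof.
  intros H. apply ctyped_conf_par_comm, ctyped_conf_par_assoc,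
    ctyped_conf_par_comm, ctyped_conf_par_assoc, ctyped_conf_par_comm, H.
Qed.

Lemma ctyped_conf_extr (G : env) (D : lenv) (C E : config) (a : ident) :
  fv_config a C = false ->
  ctyped_conf G D (Par C (Nu a E)) -> ctyped_conf G D (Nu a (Par C E)).
Proof.
  intros Ha H.
  destruct (ctyped_conf_par_inv _ _ _ _ H) as (D1 & D2 & -> & Hd & HC & HN).
  destruct (ctyped_conf_nu_inv _ _ _ _ HN) as (A & HD2a & HE).
  assert (HD1a : D1 a = None) by (eapply ctyped_conf_fresh_dom; eauto).
  apply T_Pid with A.
  - unfold lunion. now rewrite HD1a.
  - rewrite extend_lunion_r by exact HD1a. constructor; auto.
    + now apply ctyped_conf_extend_fresh.
    + now apply ldisjoint_extend_r.
Qed.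

Lemma ctyped_conf_extr_inv (G : env) (D : lenv) (C E : config) (a : ident) :
  fv_config a C = false ->
  ctyped_conf G D (Nu a (Par C E)) -> ctyped_conf G D (Par C (Nu a E)).
Proof.
  intros Ha H.
  destruct (ctyped_conf_nu_inv _ _ _ _ H) as (A & HDa & HP).
  destruct (ctyped_conf_par_inv _ _ _ _ HP) as (D1 & D2 & HD12 & Hd & HC & HE).
  assert (HD1a : D1 a = None) by (eapply ctyped_conf_fresh_dom; eauto).
  assert (HD2a : D2 a = Some A).
  { pose proof (f_equal (fun f => f a) HD12) as Hat.
    unfold lunion, extend in Hat. now rewrite HD1a, Nat.eqb_refl in Hat. }
  assert (HD : D = lunion D1 (lremove D2 a)).
  { apply extend_inj with a A.
    - exact HDa.
    - unfold lunion. now rewrite HD1a, lremove_eq.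
    - now rewrite extend_lunion_r, extend_lremove. }
  rewrite HD. constructor.
  - now apply ctyped_conf_extend_fresh with a (TRef A).
  - apply T_Pid with A; [apply lremove_eq | now rewrite extend_lremove].
  - now apply ldisjoint_lremove_r.
Qed.

Lemma scong_ctyped_conf (C1 C2 : config) :
  scong C1 C2 ->
  forall G D, ctyped_conf G D C1 <-> ctyped_conf G D C2.
Proof.
  induction 1; intros G0 D0.
  - reflexivity.
  - now symmetry.
  - now rewrite IHscong1.
  - split; apply ctyped_conf_par_comm.
  - split; [apply ctyped_conf_par_assoc | apply ctyped_conf_par_assoc_inv].
  - split; [apply ctyped_conf_extr | apply ctyped_conf_extr_inv]; assumption.
  - split; intros HT;
      destruct (ctyped_conf_par_inv _ _ _ _ HT) as (D1 & D2 & -> & Hd & HC & HE);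
      constructor; auto; now apply IHscong.
  - split; intros HT;
      destruct (ctyped_conf_nu_inv _ _ _ _ HT) as (A & HDa & HC);
      apply T_Pid with A; auto; now apply IHscong.
Qed.

Theorem lemma11 : forall (G : env) (D : lenv) (C1 C2 : config),
  ctyped_conf G D C1 -> scong C1 C2 -> ctyped_conf G D C2.
Proof.
  intros G D C1 C2 HC1 Hcong. now apply (scong_ctyped_conf C1 C2 Hcong).
Qed.
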